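(* Fix an amplification factor $\gamma \geq 1$ and a damping factor $0 \leq \rho < 1$. Let $A:\mathbb{R}^2\to\mathbb{R}^2$ be the linear map $A(u,v) = (u, u+v)$, let $\mathbf{1} = (1,1)$, $\mathbf{c} = (\gamma,1)$, $\mathbf{d} = (1,0)$, and define the piecewise affine map $T:\mathbb{R}^2\to\mathbb{R}^2$ by $$T\mathbf{x} = \begin{cases} A\mathbf{x} + \mathbf{1}, & \text{if } \langle \mathbf{c},\mathbf{x}\rangle \leq -1/2,\\ A\mathbf{x}, & \text{if } |\langle \mathbf{c},\mathbf{x}\rangle| < 1/2,\\ A\mathbf{x} - \mathbf{1}, & \text{if } \langle \mathbf{c},\mathbf{x}\rangle \geq 1/2,\end{cases}$$ and the asymmetrically-damped map $M:\mathbb{R}^2\to\mathbb{R}^2$ by $$M\mathbf{x} = \begin{cases} T(\rho\mathbf{x}), & \text{if } \langle \mathbf{d},\mathbf{x}\rangle \geq 0,\\ T\mathbf{x}, & \text{if } \langle \mathbf{d},\mathbf{x}\rangle < 0.\end{cases}$$ Then the origin is a globally attracting fixed point of $M$: $M\mathbf{0} = \mathbf{0}$, and for every $\mathbf{x}_0 \in \mathbb{R}^2$ the iterates $\mathbf{x}_n = M^n \mathbf{x}_0$ satisfy $\|\mathbf{x}_n\| \to 0$ as $n \to \infty$.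
   Context: $\langle\cdot,\cdot\rangle$ denotes the standard inner product on $\mathbb{R}^2$; points of $\mathbb{R}^2$ are written $\mathbf{x} = (u,v)$. *)

From Stdlib Require Import Reals.
Open Scope R_scope.

Definition inner (x y : R * R) : R := fst x * fst y + snd x * snd y.

Definition euclid_norm (x : R * R) : R := sqrt (fst x * fst x + snd x * snd x).

Definition vscale (r : R) (x : R * R) : R * R := (r * fst x, r * snd x).
Definition vadd (x y : R * R) : R * R := (fst x + fst y, snd x + snd y).
Definition vsub (x y : R * R) : R * R := (fst x - fst y, snd x - snd y).

Definition Amap (x : R * R) : R * R := (fst x, fst x + snd x).

Definition one2 : R * R := (1, 1).
Definition cvec (gamma : R) : R * R := (gamma, 1).
Definition dvec : R * R := (1, 0).

Definition Tmap (gamma : R) (x : R * R) : R * R :=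
  let s := inner (cvec gamma) x in
  if Rle_dec s (-(1/2)) then vadd (Amap x) one2
  else if Rlt_dec (Rabs s) (1/2) then Amap x
  else vsub (Amap x) one2.

Definition Mmap (gamma rho : R) (x : R * R) : R * R :=
  if Rle_dec 0 (inner dvec x) then Tmap gamma (vscale rho x)
  else Tmap gamma x.

Fixpoint iterM (gamma rho : R) (n : nat) (x : R * R) : R * R :=
  match n with
  | O => x
  | S k => Mmap gamma rho (iterM gamma rho k x)
  end.

From Stdlib Require Import Reals Lra Lia Psatz Classical.
Open Scope R_scope.

(* The energy [E(u,v) = |v - u/2| + u^2/2] drives the argument.  The kick by [-1] preserves
   [v - u/2 + u^2/2], the kick by [+1] preserves [-(v - u/2) + u^2/2], and the damping [x |-> rho x]
   multiplies [E] by at most [rho]; hence [M] can raise [E] only by landing in a forward-invariant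
   region [trap].

   If the orbit avoids [trap], [E] is non-increasing.  While [u < 0] the first coordinate moves by
   integers and [v - u] changes by [u], so [v - u], which is bounded below by [-E - 1/8], would
   diverge: the orbit keeps returning to [u >= 0], where [E] shrinks by the factor [rho].

   If the orbit enters [trap], each passage through [u >= 0] multiplies [u] by [rho], until the orbit
   reaches a region where no kick occurs.  There [M x = A (rho x)], and
   [(1 - rho) |<c,x>| + 2u] contracts by the factor [(1 + rho)/2]. *)

Definition cval (g : R) (x : R * R) : R := g * fst x + snd x.

Lemma Tmap_ge g u v : 1/2 <= g*u + v -> Tmap g (u, v) = (u - 1, u + v - 1).
Proof.
  intro H. unfold Tmap, inner, cvec; simpl. rewrite Rmult_1_l.
  destruct (Rle_dec (g*u + v) (-(1/2))); [lra|].
  destruct (Rlt_dec (Rabs (g*u + v)) (1/2)); [|reflexivity].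
  pose proof (Rle_abs (g*u + v)); lra.
Qed.

Lemma Tmap_mid g u v : -(1/2) < g*u + v < 1/2 -> Tmap g (u, v) = (u, u + v).
Proof.
  intro H. unfold Tmap, inner, cvec; simpl. rewrite Rmult_1_l.
  destruct (Rle_dec (g*u + v) (-(1/2))); [lra|].
  destruct (Rlt_dec (Rabs (g*u + v)) (1/2)); [reflexivity|].
  exfalso; apply n0, Rabs_def1; lra.
Qed.

Lemma Tmap_le g u v : g*u + v <= -(1/2) -> Tmap g (u, v) = (u + 1, u + v + 1).
Proof.
  intro H. unfold Tmap, inner, cvec; simpl. rewrite Rmult_1_l.
  destruct (Rle_dec (g*u + v) (-(1/2))); [reflexivity|lra].
Qed.

Lemma Mmap_nonneg g r u v : 0 <= u -> Mmap g r (u, v) = Tmap g (r*u, r*v).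
Proof.
  intro H. unfold Mmap, inner, dvec; simpl.
  destruct (Rle_dec 0 (1*u + 0*v)); [reflexivity|lra].
Qed.

Lemma Mmap_neg g r u v : u < 0 -> Mmap g r (u, v) = Tmap g (u, v).
Proof.
  intro H. unfold Mmap, inner, dvec; simpl.
  destruct (Rle_dec 0 (1*u + 0*v)); [lra|reflexivity].
Qed.

Lemma iterM_add g r k n x : iterM g r (k + n) x = iterM g r k (iterM g r n x).
Proof. induction k as [|k IH]; simpl; [reflexivity|now rewrite IH]. Qed.

Lemma iterM_S g r n x : iterM g r (S n) x = iterM g r n (Mmap g r x).
Proof. rewrite <- Nat.add_1_r, iterM_add. reflexivity. Qed.

Lemma orbit_norm_cv_shift g r N x :
  Un_cv (fun n => euclid_norm (iterM g r n (iterM g r N x))) 0 ->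
  Un_cv (fun n => euclid_norm (iterM g r n x)) 0.
Proof.
  intro H. apply (CV_shift _ N). intros eps He.
  destruct (H eps He) as [M HM]. exists M. intros n Hn. rewrite iterM_add. exact (HM n Hn).
Qed.

Lemma Un_cv_geometric_bound (f : nat -> R) (q C : R) : 0 <= q < 1 ->
  (forall n, 0 <= f n <= C * q ^ n) -> Un_cv f 0.
Proof.
  intros Hq Hf eps He.
  assert (HC : 0 <= C) by (specialize (Hf 0%nat); simpl in Hf; lra).
  destruct (pow_lt_1_zero q ltac:(rewrite Rabs_right; lra) (eps / (C + 1)))
    as [N HN]; [apply Rdiv_lt_0_compat; lra|].
  exists N. intros n Hn. specialize (HN n Hn). specialize (Hf n).
  rewrite Rabs_right in HN by (apply Rle_ge, pow_le; lra).
  unfold R_dist. rewrite Rminus_0_r, Rabs_right by lra.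
  apply (Rmult_lt_compat_l (C + 1)) in HN; [|lra].
  replace ((C + 1) * (eps / (C + 1))) with eps in HN by (field; lra).
  assert (0 <= q ^ n) by (apply pow_le; lra). nra.
Qed.

Definition Eplus (x : R * R) : R := snd x - fst x / 2 + fst x * fst x / 2.
Definition Eminus (x : R * R) : R := fst x / 2 - snd x + fst x * fst x / 2.
Definition energy (x : R * R) : R := Rmax (Eplus x) (Eminus x).

Lemma energy_nonneg x : 0 <= energy x.
Proof.
  pose proof (Rmax_l (Eplus x) (Eminus x)). pose proof (Rmax_r (Eplus x) (Eminus x)).
  unfold energy, Eplus, Eminus in *. nra.
Qed.

Lemma energy_scale t u v : 0 <= t <= 1 -> energy (t*u, t*v) <= t * energy (u, v).
Proof.
  intro Ht.
  pose proof (Rmax_l (Eplus (u, v)) (Eminus (u, v))).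
  pose proof (Rmax_r (Eplus (u, v)) (Eminus (u, v))).
  fold (energy (u, v)) in *. set (E := energy (u, v)) in *.
  assert (0 <= t * (1 - t) * (u * u)) by (apply Rmult_le_pos; [apply Rmult_le_pos|]; nra).
  unfold energy, Eplus, Eminus in *; simpl in *. apply Rmax_lub; nra.
Qed.

Lemma energy_diag_lower x : - energy x - 1/8 <= snd x - fst x.
Proof.
  pose proof (Rmax_r (Eplus x) (Eminus x)). pose proof (pow2_ge_0 (fst x - 1/2)).
  unfold energy, Eminus in *. nra.
Qed.

Lemma norm_le_abs_sum u v : euclid_norm (u, v) <= Rabs u + Rabs v.
Proof.
  unfold euclid_norm; simpl.
  pose proof (Rabs_pos u). pose proof (Rabs_pos v).
  rewrite <- (sqrt_Rsqr (Rabs u + Rabs v)) by lra.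
  apply sqrt_le_1_alt.
  pose proof (Rsqr_abs u). pose proof (Rsqr_abs v). unfold Rsqr in *. nra.
Qed.

Lemma norm_lt_of_energy_lt x eps : 0 < eps -> energy x < Rmin (eps/4) (eps*eps/8) ->
  euclid_norm x < eps.
Proof.
  intros He HE. destruct x as [u v].
  pose proof (Rmin_l (eps/4) (eps*eps/8)). pose proof (Rmin_r (eps/4) (eps*eps/8)).
  pose proof (Rmax_l (Eplus (u, v)) (Eminus (u, v))).
  pose proof (Rmax_r (Eplus (u, v)) (Eminus (u, v))).
  fold (energy (u, v)) in *. set (E := energy (u, v)) in *.
  unfold Eplus, Eminus in *; simpl in *.
  assert (Hu : Rabs u < eps/2).
  { destruct (Rlt_dec (Rabs u) (eps/2)) as [h|h]; [exact h|].
    pose proof (Rsqr_abs u). unfold Rsqr in *. nra. }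
  assert (Hv : Rabs v <= E + Rabs u / 2).
  { pose proof (Rle_abs u). pose proof (Rle_abs (-u)). rewrite Rabs_Ropp in *.
    apply Rabs_le. split; nra. }
  pose proof (norm_le_abs_sum u v). lra.
Qed.

Lemma norm_cv_of_energy_cv (x : nat -> R * R) :
  Un_cv (fun n => energy (x n)) 0 -> Un_cv (fun n => euclid_norm (x n)) 0.
Proof.
  intros HE eps He.
  assert (Hd : 0 < Rmin (eps/4) (eps*eps/8)) by (apply Rmin_glb_lt; nra).
  destruct (HE _ Hd) as [N HN]. exists N. intros n Hn.
  specialize (HN n Hn). unfold R_dist in *. rewrite Rminus_0_r in *.
  rewrite Rabs_right in HN by (apply Rle_ge, energy_nonneg).
  rewrite Rabs_right by (apply Rle_ge, sqrt_pos).
  now apply norm_lt_of_energy_lt.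
Qed.

Lemma Mmap_neg_fst g r u v : u < 0 -> exists z : Z, fst (Mmap g r (u, v)) = u + IZR z.
Proof.
  intro Hu. rewrite Mmap_neg by lra.
  destruct (Rle_dec (1/2) (g*u + v)).
  - rewrite Tmap_ge by lra. exists (-1)%Z. simpl. ring.
  - destruct (Rle_dec (g*u + v) (-(1/2))).
    + rewrite Tmap_le by lra. exists 1%Z. simpl. ring.
    + rewrite Tmap_mid by lra. exists 0%Z. simpl. ring.
Qed.

Lemma Mmap_neg_diag g r u v : u < 0 -> snd (Mmap g r (u, v)) - fst (Mmap g r (u, v)) = v.
Proof.
  intro Hu. rewrite Mmap_neg by lra.
  destruct (Rle_dec (1/2) (g*u + v)).
  - rewrite Tmap_ge by lra. simpl. ring.
  - destruct (Rle_dec (g*u + v) (-(1/2))).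
    + rewrite Tmap_le by lra. simpl. ring.
    + rewrite Tmap_mid by lra. simpl. ring.
Qed.

Lemma neg_integer_translates_bounded c :
  exists d, 0 < d /\ forall z : Z, c + IZR z < 0 -> c + IZR z <= -d.
Proof.
  destruct (archimed (-c)) as [Hup1 Hup2]. set (m := up (-c)) in *.
  assert (Hz : forall z : Z, c + IZR z < 0 -> (z <= m - 1)%Z).
  { intros z Hz. assert (z < m)%Z by (apply lt_IZR; lra). lia. }
  destruct (Rlt_dec (c + IZR m - 1) 0) as [Hc|Hc].
  - exists (- (c + IZR m - 1)). split; [lra|].
    intros z Hneg. pose proof (IZR_le _ _ (Hz z Hneg)) as Hm.
    rewrite minus_IZR in Hm. simpl in Hm. lra.
  - exists 1. split; [lra|]. intros z Hneg.
    assert (z <> m - 1)%Z by (intros ->; rewrite minus_IZR in Hneg; simpl in Hneg; lra).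
    assert (Hz2 : (z <= m - 2)%Z) by (specialize (Hz z Hneg); lia).
    apply IZR_le in Hz2. rewrite minus_IZR in Hz2. simpl in Hz2. lra.
Qed.

Section Dynamics.

Variables g r : R.
Hypothesis g_ge1 : 1 <= g.
Hypothesis r_ge0 : 0 <= r.
Hypothesis r_lt1 : r < 1.

Definition trap (x : R * R) : Prop :=
  (0 <= fst x < 1 /\ -(1/2) < r * cval g x /\ cval g x <= g - 1/2 + fst x) \/
  (-1 <= fst x < 0 /\ -(1/2) - g <= cval g x < 1/2).

Lemma Tmap_trap_or_energy_le y : trap (Tmap g y) \/ energy (Tmap g y) <= energy y.
Proof.
  destruct y as [u v].
  pose proof (Rmax_l (Eplus (u, v)) (Eminus (u, v))) as Ep.
  pose proof (Rmax_r (Eplus (u, v)) (Eminus (u, v))) as Em.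
  fold (energy (u, v)) in Ep, Em. set (E := energy (u, v)) in *.
  unfold trap, energy, cval, Eplus, Eminus in *; simpl in *.
  destruct (Rle_dec (1/2) (g*u + v)) as [Hs|Hs].
  - rewrite Tmap_ge by lra; simpl.
    destruct (Rle_dec ((u-1)/2 - (u+v-1) + (u-1)*(u-1)/2) E) as [H|H].
    + right. apply Rmax_lub; lra.
    + left; right. assert (0 < u < 1/2) by nra. nra.
  - destruct (Rle_dec (g*u + v) (-(1/2))) as [Hs'|Hs'].
    + rewrite Tmap_le by lra; simpl.
      destruct (Rle_dec (u+v+1 - (u+1)/2 + (u+1)*(u+1)/2) E) as [H|H].
      * right. apply Rmax_lub; lra.
      * left; left. assert (-(1/2) < u < 0) by nra.
        assert (0 < g*(u+1) + (u+v+1)) by nra. repeat split; nra.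
    + rewrite Tmap_mid by lra; simpl.
      destruct (Rle_dec 0 u) as [Hu|Hu].
      * destruct (Rle_dec (u+v - u/2 + u*u/2) E) as [H|H].
        -- right. apply Rmax_lub; lra.
        -- left; left. assert (0 < u < 1/2) by nra.
           assert (0 <= r * (g*u + (u+v))) by (apply Rmult_le_pos; nra).
           repeat split; lra.
      * destruct (Rle_dec (u/2 - (u+v) + u*u/2) E) as [H|H].
        -- right. apply Rmax_lub; lra.
        -- left; right. assert (-(1/2) < u) by nra. repeat split; nra.
Qed.

Lemma Mmap_trap_or_energy_le x :
  trap (Mmap g r x) \/
  (energy (Mmap g r x) <= energy x /\ (0 <= fst x -> energy (Mmap g r x) <= r * energy x)).
Proof.
  destruct x as [u v]; simpl fst.
  pose proof (energy_nonneg (u, v)) as E0.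
  destruct (Rle_dec 0 u) as [Hu|Hu].
  - rewrite Mmap_nonneg by exact Hu.
    destruct (Tmap_trap_or_energy_le (r*u, r*v)) as [H|H]; [now left|right].
    pose proof (energy_scale r u v ltac:(lra)). split; [nra|lra].
  - rewrite Mmap_neg by lra.
    destruct (Tmap_trap_or_energy_le (u, v)) as [H|H]; [now left|right].
    split; [exact H|lra].
Qed.

Section AvoidingTrap.

Variable x0 : R * R.
Hypothesis avoids_trap : forall n, ~ trap (iterM g r n x0).

Lemma energy_step n :
  energy (iterM g r (S n) x0) <= energy (iterM g r n x0) /\
  (0 <= fst (iterM g r n x0) -> energy (iterM g r (S n) x0) <= r * energy (iterM g r n x0)).
Proof.
  destruct (Mmap_trap_or_energy_le (iterM g r n x0)) as [H|H]; [|exact H].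
  exfalso. exact (avoids_trap (S n) H).
Qed.

Lemma energy_antitone k n : energy (iterM g r (k + n) x0) <= energy (iterM g r n x0).
Proof.
  induction k as [|k IH]; [simpl; lra|].
  eapply Rle_trans; [exact (proj1 (energy_step (k + n)))|exact IH].
Qed.

Lemma nonneg_infinitely_often N : exists n, (N <= n)%nat /\ 0 <= fst (iterM g r n x0).
Proof.
  apply NNPP. intro Hnot.
  assert (Hneg : forall k, fst (iterM g r (k + N) x0) < 0).
  { intro k. apply Rnot_le_lt. intro H. apply Hnot. exists (k + N)%nat. split; [lia|exact H]. }
  set (c := fst (iterM g r N x0)).
  assert (Hint : forall k, exists z, fst (iterM g r (k + N) x0) = c + IZR z).
  { induction k as [|k [z Hz]]; [exists 0%Z; simpl; unfold c; ring|].
    specialize (Hneg k). change (S k + N)%nat with (S (k + N)). simpl.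
    destruct (iterM g r (k + N) x0) as [u v]. simpl in Hz, Hneg.
    destruct (Mmap_neg_fst g r u v Hneg) as [z' ->].
    exists (z + z')%Z. rewrite plus_IZR, Hz. ring. }
  destruct (neg_integer_translates_bounded c) as [d [Hd Hgap]].
  assert (Hle : forall k, fst (iterM g r (k + N) x0) <= - d).
  { intro k. destruct (Hint k) as [z Hz]. rewrite Hz. apply Hgap. rewrite <- Hz. apply Hneg. }
  set (P n := snd (iterM g r n x0) - fst (iterM g r n x0)).
  assert (HP : forall k, P (k + N)%nat <= P N - INR k * d).
  { induction k as [|k IH]; [simpl; lra|].
    unfold P in *. rewrite S_INR. change (S k + N)%nat with (S (k + N)). simpl iterM.
    pose proof (Hle k). pose proof (Hneg k).
    destruct (iterM g r (k + N) x0) as [u v]. simpl fst in *. simpl snd in *.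
    rewrite Mmap_neg_diag by assumption. nra. }
  destruct (INR_archimed d (P N + energy (iterM g r N x0) + 1/8) Hd) as [k Hk].
  pose proof (HP k). pose proof (energy_diag_lower (iterM g r (k + N) x0)).
  pose proof (energy_antitone k N). unfold P in *. lra.
Qed.

Lemma energy_decay k :
  exists N, forall n, (N <= n)%nat -> energy (iterM g r n x0) <= r ^ k * energy x0.
Proof.
  induction k as [|k [N HN]].
  - exists 0%nat. intros n _. rewrite <- (Nat.add_0_r n), Rmult_1_l. apply energy_antitone.
  - destruct (nonneg_infinitely_often N) as [n1 [Hn1 Hu]].
    exists (S n1). intros n Hn. replace n with ((n - S n1) + S n1)%nat by lia.
    pose proof (energy_antitone (n - S n1) (S n1)).
    pose proof (proj2 (energy_step n1) Hu). pose proof (HN n1 Hn1).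
    simpl. assert (r * energy (iterM g r n1 x0) <= r * (r ^ k * energy x0))
      by (apply Rmult_le_compat_l; lra).
    lra.
Qed.

Lemma avoiding_orbit_cv : Un_cv (fun n => euclid_norm (iterM g r n x0)) 0.
Proof.
  apply norm_cv_of_energy_cv. intros eps He.
  pose proof (energy_nonneg x0).
  destruct (pow_lt_1_zero r ltac:(rewrite Rabs_right; lra) (eps / (energy x0 + 1)))
    as [k Hk]; [apply Rdiv_lt_0_compat; lra|].
  specialize (Hk k (Nat.le_refl k)). rewrite Rabs_right in Hk by (apply Rle_ge, pow_le; lra).
  destruct (energy_decay k) as [N HN]. exists N. intros n Hn.
  specialize (HN n Hn). pose proof (energy_nonneg (iterM g r n x0)).
  unfold R_dist. rewrite Rminus_0_r, Rabs_right by lra.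
  apply (Rmult_lt_compat_r (energy x0 + 1)) in Hk; [|lra].
  unfold Rdiv in Hk. rewrite Rmult_assoc, Rinv_l, Rmult_1_r in Hk by lra.
  assert (r ^ k * energy x0 <= r ^ k * (energy x0 + 1))
    by (apply Rmult_le_compat_l; [apply pow_le|]; lra).
  lra.
Qed.

End AvoidingTrap.

Lemma Mmap_nonneg_kick u v : 0 <= u -> 1/2 <= r * (g*u + v) ->
  Mmap g r (u, v) = (r*u - 1, r*u + r*v - 1).
Proof. intros Hu H. rewrite Mmap_nonneg, Tmap_ge by nra. reflexivity. Qed.

Lemma Mmap_nonneg_quiet u v : 0 <= u -> -(1/2) < r * (g*u + v) < 1/2 ->
  Mmap g r (u, v) = (r*u, r*u + r*v).
Proof. intros Hu H. rewrite Mmap_nonneg, Tmap_mid by nra. reflexivity. Qed.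

Lemma trap_invariant x : trap x -> trap (Mmap g r x).
Proof.
  destruct x as [u v]. unfold trap, cval; simpl.
  intros [[Hu [Hs1 Hs2]]|[Hu Hs]].
  - destruct (Rle_dec (1/2) (r * (g*u + v))) as [H|H].
    + rewrite Mmap_nonneg_kick by lra; simpl. right.
      assert (0 <= r*u < 1) by nra.
      assert (r*(g*u + v) <= r*(g - 1/2 + u)) by (apply Rmult_le_compat_l; lra).
      assert (r*(g + 3/2) < g + 3/2) by nra.
      repeat split; nra.
    + rewrite Mmap_nonneg_quiet by lra; simpl. left.
      assert (0 <= r*u < 1) by nra.
      assert (-(1/2) < r*(r*(g*u + v))) by nra.
      repeat split; nra.
  - rewrite Mmap_neg by lra.
    destruct (Rle_dec (g*u + v) (-(1/2))) as [H|H].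
    + rewrite Tmap_le by lra; simpl. left.
      assert (-(1/2) <= g*(u+1) + (u+v+1)) by nra.
      assert (-(1/2) < r*(g*(u+1) + (u+v+1))) by nra.
      repeat split; nra.
    + rewrite Tmap_mid by lra; simpl. right. repeat split; nra.
Qed.

(* Between kicks [cval] drops by [-u] per step, so the kick [+1] comes within [N] steps. *)
Lemma trap_neg_climb_bounded N x : trap x -> fst x < 0 ->
  cval g x < -(1/2) + INR N * (- fst x) ->
  exists k, trap (iterM g r k x) /\ fst (iterM g r k x) = fst x + 1 /\
    cval g (iterM g r k x) <= cval g x + fst x + g + 1.
Proof.
  revert x. induction N as [|N IH]; intros [u v] Hx Hu Hs; simpl fst in *.
  - exists 1%nat. split; [exact (trap_invariant _ Hx)|].
    destruct Hx as [[h _]|[h _]]; simpl in h; [lra|].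
    unfold cval in *; simpl in *. rewrite Mmap_neg, Tmap_le by lra. simpl. split; lra.
  - pose proof (trap_invariant _ Hx) as Hx'.
    rewrite S_INR in Hs.
    destruct Hx as [[h _]|[h hs]]; simpl in h; [lra|]. unfold cval in hs, Hs; simpl in hs, Hs.
    rewrite Mmap_neg in Hx' by lra.
    destruct (Rle_dec (g*u + v) (-(1/2))) as [H|H].
    + exists 1%nat. simpl. rewrite Mmap_neg, Tmap_le by lra.
      rewrite Tmap_le in Hx' by lra. unfold cval; simpl. split; [exact Hx'|split; lra].
    + rewrite Tmap_mid in Hx' by lra.
      destruct (IH (u, u + v) Hx' ltac:(simpl; lra) ltac:(unfold cval; simpl; nra))
        as [k [Hk1 [Hk2 Hk3]]].
      exists (S k). rewrite iterM_S, Mmap_neg, Tmap_mid by lra.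
      unfold cval in *; simpl in *. split; [exact Hk1|split; lra].
Qed.

Lemma trap_neg_climb x : trap x -> fst x < 0 ->
  exists k, trap (iterM g r k x) /\ fst (iterM g r k x) = fst x + 1 /\
    cval g (iterM g r k x) <= cval g x + fst x + g + 1.
Proof.
  intros Hx Hu.
  destruct (INR_archimed (- fst x) (cval g x + 1/2) ltac:(lra)) as [N HN].
  apply (trap_neg_climb_bounded N); [exact Hx|exact Hu|lra].
Qed.

Lemma trap_nonneg_shrink x : trap x -> 0 <= fst x ->
  exists k, trap (iterM g r k x) /\ fst (iterM g r k x) = r * fst x.
Proof.
  destruct x as [u v]. simpl. intros Hx Hu.
  pose proof (trap_invariant _ Hx) as Hx'.
  destruct Hx as [[h [h1 h2]]|[h _]]; simpl in h; [|lra]. unfold cval in h1; simpl in h1.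
  destruct (Rle_dec (1/2) (r * (g*u + v))) as [H|H].
  - rewrite Mmap_nonneg_kick in Hx' by assumption.
    destruct (trap_neg_climb _ Hx' ltac:(simpl; nra)) as [k [Hk1 [Hk2 _]]].
    exists (S k). rewrite iterM_S, Mmap_nonneg_kick by assumption.
    split; [exact Hk1|]. rewrite Hk2. simpl. ring.
  - exists 1%nat. simpl. rewrite Mmap_nonneg_quiet in * by lra. split; [exact Hx'|reflexivity].
Qed.

Lemma trap_reach_small k x : trap x ->
  exists n, trap (iterM g r n x) /\ 0 <= fst (iterM g r n x) <= r ^ k.
Proof.
  intro Hx. induction k as [|k [n [Hn1 Hn2]]].
  - destruct (Rle_dec 0 (fst x)) as [Hu|Hu].
    + exists 0%nat. simpl. split; [exact Hx|]. destruct Hx as [[h _]|[h _]]; lra.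
    + destruct (trap_neg_climb x Hx ltac:(lra)) as [k [Hk1 [Hk2 _]]].
      assert (-1 <= fst x) by (destruct Hx as [[h _]|[h _]]; lra).
      exists k. simpl. split; [exact Hk1|lra].
  - destruct (trap_nonneg_shrink _ Hn1 (proj1 Hn2)) as [k' [H1 H2]].
    exists (k' + n)%nat. rewrite iterM_add. split; [exact H1|]. rewrite H2. simpl.
    split; [nra|]. apply Rmult_le_compat_l; lra.
Qed.

(* On [quiet] states [Mmap] acts as the linear map [x |-> Amap (r x)]. *)
Definition quiet (x : R * R) : Prop :=
  trap x /\ 0 <= fst x <= (1 - r) / 4 /\ r * cval g x < 1/2.

(* A kick followed by the climb back to [u >= 0] lowers [cval] by at least [1/2]. *)
Lemma quiet_reach_bounded N x : trap x -> 0 <= fst x <= (1 - r) / 4 ->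
  cval g x <= INR N / 2 -> exists k, quiet (iterM g r k x).
Proof.
  revert x. induction N as [|N IH]; intros [u v] Hx Hu Hs; simpl fst in *.
  - exists 0%nat. refine (conj Hx (conj Hu _)). simpl in Hs.
    assert (r * cval g (u, v) <= r * 0) by (apply Rmult_le_compat_l; lra). simpl. lra.
  - destruct (Rlt_dec (r * cval g (u, v)) (1/2)) as [H|H].
    { exists 0%nat. exact (conj Hx (conj Hu H)). }
    pose proof (trap_invariant _ Hx) as Hx'.
    rewrite S_INR in Hs. unfold cval in H, Hs; simpl in H, Hs.
    rewrite Mmap_nonneg_kick in Hx' by lra.
    destruct (trap_neg_climb _ Hx' ltac:(simpl; nra)) as [k [Hk1 [Hk2 Hk3]]].
    unfold cval at 2 in Hk3. simpl fst in Hk2, Hk3. simpl snd in Hk3.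
    assert (0 < g*u + v) by nra.
    assert (r*(g*u + v) <= g*u + v) by nra.
    destruct (IH _ Hk1 ltac:(rewrite Hk2; nra) ltac:(nra)) as [k' Hk'].
    exists (k' + (k + 1))%nat. rewrite !iterM_add. simpl iterM at 2.
    rewrite Mmap_nonneg_kick by lra. exact Hk'.
Qed.

Lemma quiet_reach x : trap x -> 0 <= fst x <= (1 - r) / 4 -> exists k, quiet (iterM g r k x).
Proof.
  intros Hx Hu. destruct (INR_unbounded (2 * cval g x)) as [N HN].
  apply (quiet_reach_bounded N); [exact Hx|exact Hu|lra].
Qed.

Definition lyap (x : R * R) : R := (1 - r) * Rabs (cval g x) + 2 * fst x.

Lemma quiet_step x : quiet x ->
  quiet (Mmap g r x) /\ lyap (Mmap g r x) <= (1 + r) / 2 * lyap x.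
Proof.
  intro Hq. pose proof (trap_invariant x (proj1 Hq)) as Hx'.
  destruct x as [u v]. destruct Hq as [Hx [Hu Hs]]. simpl fst in *.
  assert (Hs2 : -(1/2) < r * cval g (u, v))
    by (destruct Hx as [[_ [h _]]|[h _]]; simpl in h; [exact h|lra]).
  unfold cval in *; simpl in *.
  rewrite Mmap_nonneg_quiet in * by lra.
  unfold quiet, lyap, cval; simpl. split.
  - repeat split; try assumption; try nra.
    replace (r * (g * (r * u) + (r * u + r * v))) with (r * (r * (g*u + v)) + r * r * u) by ring.
    assert (r * r <= 1) by nra. assert (0 <= (1 - r * r) * u) by (apply Rmult_le_pos; lra).
    assert (r * (r * (g*u + v)) <= r * (1/2)) by (apply Rmult_le_compat_l; lra).
    lra.
  - replace (g * (r*u) + (r*u + r*v)) with (r * (g*u + v) + r*u) by ring.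
    pose proof (Rabs_triang (r * (g*u + v)) (r*u)) as Ht.
    rewrite Rabs_mult, (Rabs_right r), (Rabs_right (r*u)) in Ht by nra.
    pose proof (Rabs_pos (g*u + v)).
    assert ((1-r) * Rabs (r * (g*u + v) + r*u) <= (1-r) * (r * Rabs (g*u + v) + r*u))
      by (apply Rmult_le_compat_l; lra).
    assert (0 <= (1-r) * (1-r) * Rabs (g*u + v)) by (apply Rmult_le_pos; nra).
    assert (0 <= (1-r) * (1-r) * u) by (apply Rmult_le_pos; nra).
    nra.
Qed.

Lemma quiet_iter x : quiet x -> forall m,
  quiet (iterM g r m x) /\ lyap (iterM g r m x) <= ((1 + r) / 2) ^ m * lyap x.
Proof.
  intros Hq m. induction m as [|m [H1 H2]]; [simpl; split; [exact Hq|lra]|].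
  destruct (quiet_step _ H1) as [H3 H4]. split; [exact H3|].
  simpl. assert ((1 + r) / 2 * lyap (iterM g r m x) <= (1 + r) / 2 * (((1 + r) / 2) ^ m * lyap x))
    by (apply Rmult_le_compat_l; lra).
  lra.
Qed.

Lemma norm_le_lyap x : 0 <= fst x -> euclid_norm x <= (1 / (1 - r) + (1 + g) / 2) * lyap x.
Proof.
  destruct x as [u v]. simpl. intro Hu.
  pose proof (norm_le_abs_sum u v). unfold lyap, cval in *; simpl in *.
  pose proof (Rabs_pos (g*u + v)).
  assert (Rabs v <= Rabs (g*u + v) + g*u).
  { replace v with ((g*u + v) - g*u) at 1 by ring.
    eapply Rle_trans; [apply Rabs_triang|].
    rewrite Rabs_Ropp, (Rabs_right (g*u)) by nra. lra. }
  rewrite (Rabs_right u) in * by lra.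
  assert (Rabs (g*u + v) = 1 / (1 - r) * ((1 - r) * Rabs (g*u + v))) by (field; lra).
  assert (0 < 1 / (1 - r)) by (apply Rdiv_lt_0_compat; lra).
  assert (1 / (1 - r) * ((1 - r) * Rabs (g*u + v)) <=
          1 / (1 - r) * ((1 - r) * Rabs (g*u + v) + 2 * u))
    by (apply Rmult_le_compat_l; lra).
  nra.
Qed.

Lemma quiet_orbit_cv x : quiet x -> Un_cv (fun n => euclid_norm (iterM g r n x)) 0.
Proof.
  intro Hq. set (K := 1 / (1 - r) + (1 + g) / 2).
  assert (HK : 0 < K)
    by (unfold K; assert (0 < 1 / (1 - r)) by (apply Rdiv_lt_0_compat; lra); lra).
  apply (Un_cv_geometric_bound _ ((1 + r) / 2) (K * lyap x)); [lra|]. intro n.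
  destruct (quiet_iter x Hq n) as [[_ [Hu _]] Hl].
  pose proof (norm_le_lyap _ (proj1 Hu)). fold K in H.
  split; [apply sqrt_pos|].
  assert (K * lyap (iterM g r n x) <= K * (((1 + r) / 2) ^ n * lyap x))
    by (apply Rmult_le_compat_l; lra).
  lra.
Qed.

Lemma trapped_orbit_cv x : trap x -> Un_cv (fun n => euclid_norm (iterM g r n x)) 0.
Proof.
  intro Hx.
  destruct (pow_lt_1_zero r ltac:(rewrite Rabs_right; lra) ((1 - r) / 4) ltac:(lra)) as [k Hk].
  specialize (Hk k (Nat.le_refl k)). rewrite Rabs_right in Hk by (apply Rle_ge, pow_le; lra).
  destruct (trap_reach_small k x Hx) as [n [Hn1 Hn2]].
  destruct (quiet_reach _ Hn1 ltac:(lra)) as [m Hm].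
  apply (orbit_norm_cv_shift g r n), (orbit_norm_cv_shift g r m), quiet_orbit_cv, Hm.
Qed.

End Dynamics.

Theorem theorem1 (gamma rho : R) (hgamma : 1 <= gamma)
  (hrho0 : 0 <= rho) (hrho1 : rho < 1) :
  Mmap gamma rho (0, 0) = (0, 0) /\
  forall x0 : R * R,
    Un_cv (fun n => euclid_norm (iterM gamma rho n x0)) 0.
Proof.
  split.
  { rewrite Mmap_nonneg, Rmult_0_r, Tmap_mid by lra. f_equal; ring. }
  intro x0.
  destruct (classic (exists N, trap gamma rho (iterM gamma rho N x0))) as [[N HN]|HN].
  - apply (orbit_norm_cv_shift gamma rho N), trapped_orbit_cv; assumption.
  - apply avoiding_orbit_cv; try assumption. intros n Hn. apply HN. now exists n.
Qed.
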